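(* Let $B$ be a vector space over a field $\mathbb{K}$ of characteristic zero with basis $b_1,\dots,b_n$, $n\geq3$, let $w\colon B\times B\to B^*$ be bilinear with $c_{ijk}:=w(b_i,b_j)(b_k)$, and let $b_1^*,\dots,b_n^*$ be the dual basis. On $\mathfrak{L}=B\oplus B^*$ define $[b+\beta,b'+\beta']=w(b,b')$ and $\phi(b+\beta,b'+\beta')=\beta(b')+\beta'(b)$. The following are equivalent: (a) $(\mathfrak{L},\phi)$ is a $2$-step nilpotent quadratic Lie algebra. (b) $w$ is a nonzero cyclic $2$-cocycle (for the abelian Lie algebra $B$) and $(\mathfrak{L},\phi)=(T^*_wB,q_B)$. (c) Setting $A_k=\mathrm{span}\langle b_i,b_i^*:i=1,\dots,k\rangle$ and, for $1\le i\le n$, $d_{i-1}\colon A_{i-1}\to A_{i-1}$ linear with $d_{i-1}(b_j^* )=0$ and $d_{i-1}(b_j)=\sum_{k=1}^{i-1}c_{ijk}b_k^*$ for $j<i$, the sequence $\{(A_k,f_k)\}_{k=0}^n$ starting at $A_0=\{0\}$, $f_0=0$, given by $\{(b_{k+1},d_k)\}_{k=0}^{n-1}$, is a chain of one-dimensional double extensions satisfying (NNP) and (2SP), and $(A_n,f_n)=(\mathfrak{L},\phi)$. (d) The family $\{M_1,\dots,M_n\}$ of $n\times n$ matrices where the $(k,j)$ entry of $M_i$ is $c_{ijk}$ is a non-null $n$-quadratic family, and the quadratic algebra it defines equals $(\mathfrak{L},\phi)$ (under $v_i=b_i$, $z_i=b_i^*$).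
   Context: A quadratic Lie algebra is a Lie algebra with a non-degenerate symmetric bilinear form $\phi$ with $\phi([x,y],z)+\phi(y,[x,z])=0$; $2$-step nilpotent means $[L,[L,L]]=0\neq[L,L]$. For $B$ abelian, a $2$-cocycle $w\colon B\times B\to B^*$ (coadjoint coefficients) is a skew-symmetric bilinear map; $w$ is cyclic if $w(a,b)(c)=w(c,a)(b)=w(b,c)(a)$. The $T^*$-extension $(T^*_wB,q_B)$ of abelian $B$ is $B\oplus B^*$ with bracket $[b+\beta,b'+\beta']=w(b,b')$ and $q_B(b+\beta,b'+\beta')=\beta(b')+\beta'(b)$. One-dimensional double extension of a quadratic Lie algebra $(A,f)$ by $(b,d)$, $d$ an $f$-skew-symmetric derivation ($f(d(x),y)+f(x,d(y))=0$): the space $\mathbb{K}b\oplus A\oplus\mathbb{K}b^*$ with bracket $[\lambda b+a+\mu b^*,\lambda'b+a'+\mu'b^*]=\lambda d(a')-\lambda'd(a)+[a,a']_A+f(d(a),a')b^*$ and form $(\lambda b+a+\mu b^*,\lambda'b+a'+\mu'b^* )\mapsto\lambda\mu'+\lambda'\mu+f(a,a')$. A chain of one-dimensional double extensions $\{(A_k,f_k)\}_{k=0}^n$ by $\{(b_{k+1},d_k)\}$: $A_0=0$, $f_0=0$, each $d_k$ an $f_k$-skew-symmetric derivation of $A_k$, and $(A_{k+1},f_{k+1})$ the one-dimensional double extension of $(A_k,f_k)$ by $(b_{k+1},d_k)$. With $A_{k,2}=\mathrm{span}\langle b_1^*,\dots,b_k^*\rangle$: (NNP) means $d_k\ne0$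 for some $k$; (2SP) means $\mathrm{im}\,d_k\subseteq A_{k,2}\subseteq\ker d_k$ for all $k\ge1$. A family $\{M_1,\dots,M_n\}$ of $n\times n$ matrices is $n$-quadratic if each $M_i$ is skew-symmetric, the $i$-th column of $M_i$ is zero, and for $j>i$ the $j$-th column of $M_i$ is the negative of the $i$-th column of $M_j$; non-null means not all matrices are zero. The quadratic algebra defined by such a family (with $m_{ijk}$ the $(k,j)$ entry of $M_i$) has basis $v_1,\dots,v_n,z_1,\dots,z_n$, bracket $[v_i,v_j]=\sum_k m_{ijk}z_k$, $[z_i,\cdot]=0$, and form $\varphi(v_i,v_j)=\varphi(z_i,z_j)=0$, $\varphi(v_i,z_j)=\delta_{ij}$. *)

From HB Require Import structures.
From mathcomp Require Import all_boot all_order all_algebra.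
Set Implicit Arguments. Unset Strict Implicit. Unset Printing Implicit Defensive.
Import Order.TTheory GRing.Theory Num.Theory.
Local Open Scope ring_scope.

Section Generic.
Variables (K : fieldType) (V : lmodType K).

Definition bilinear_form (f : V -> V -> K) : Prop :=
  (forall (a : K) x y z, f (a *: x + y) z = a * f x z + f y z) /\
  (forall (a : K) x y z, f x (a *: y + z) = a * f x y + f x z).

Definition bilinear_op (br : V -> V -> V) : Prop :=
  (forall (a : K) x y z, br (a *: x + y) z = a *: br x z + br y z) /\
  (forall (a : K) x y z, br x (a *: y + z) = a *: br x y + br x z).

Definition is_lie_algebra (br : V -> V -> V) : Prop :=
  bilinear_op br /\ (forall x, br x x = 0) /\
  (forall x y z, br x (br y z) + br y (br z x) + br z (br x y) = 0).

Definition is_quadratic_lie (br : V -> V -> V) (phi : V -> V -> K) : Prop :=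
  is_lie_algebra br /\ bilinear_form phi /\ (forall x y, phi x y = phi y x) /\
  (forall x, (forall y, phi x y = 0) -> x = 0) /\
  (forall x y z, phi (br x y) z + phi y (br x z) = 0).

Definition two_step_nilpotent (br : V -> V -> V) : Prop :=
  (forall x y z, br x (br y z) = 0) /\ (exists x y, br x y != 0).
End Generic.

(* ---------- Concrete setting: B = K^n (basis e_0..e_{n-1}), B^* = K^n in the dual basis ---------- *)
Section Concrete.
Variables (K : fieldType) (n : nat).

Definition Bsp := 'rV[K]_n.
(* L = B (+) B^*, an element is (b, beta) *)
Definition Lsp := ('rV[K]_n * 'rV[K]_n)%type.

(* basis vector b_i (and, read in B^*, the dual basis vector b_i^* ); 0 if i >= n *)
Definition bvec (i : nat) : 'rV[K]_n := \row_(j < n) (j == i :> nat)%:R.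

(* evaluation beta(b) of beta in B^* (dual-basis coordinates) at b in B *)
Definition dpair (beta b : 'rV[K]_n) : K := \sum_(i < n) beta 0 i * b 0 i.

Definition coord (x : 'rV[K]_n) (i : nat) : K := dpair x (bvec i).

Variable w : 'rV[K]_n -> 'rV[K]_n -> 'rV[K]_n.

(* structure constants c_ijk = w(b_i,b_j)(b_k) (0-indexed) *)
Definition cc (i j k : nat) : K := dpair (w (bvec i) (bvec j)) (bvec k).

Definition Lbr (u v : Lsp) : Lsp := (0, w u.1 v.1).
Definition Lform (u v : Lsp) : K := dpair u.2 v.1 + dpair v.2 u.1.

Definition cocycle_abelian : Prop :=
  bilinear_op w /\ (forall a b, w a b = - w b a).
Definition cyclic_w : Prop :=
  forall a b c, dpair (w a b) c = dpair (w c a) b /\ dpair (w c a) b = dpair (w b c) a.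
Definition tstar_br (u v : Lsp) : Lsp := (0, w u.1 v.1).
Definition tstar_form (u v : Lsp) : K := dpair u.2 v.1 + dpair v.2 u.1.

(* A_k = span<b_i, b_i^* : i < k>   (0-indexed) *)
Definition proj (k : nat) (u : Lsp) : Lsp :=
  (\row_(i < n) (if (i < k)%N then u.1 0 i else 0),
   \row_(i < n) (if (i < k)%N then u.2 0 i else 0)).
Definition inA (k : nat) (u : Lsp) : Prop := proj k u = u.
Definition inA2 (k : nat) (u : Lsp) : Prop := u.1 = 0 /\ inA k u.

Definition dmap (k : nat) (u : Lsp) : Lsp :=
  (0, \sum_(m < n | (m < k)%N)
        (\sum_(j < n | (j < k)%N) cc k j m * u.1 0 j) *: bvec m).

Definition bL (k : nat) : Lsp := (bvec k, 0).
Definition bsL (k : nat) : Lsp := (0, bvec k).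

(* form f_k of A_k, obtained by iterated double extension from f_0 = 0;
   u = lam b_k + a + mu b_k^* with a in A_k *)
Fixpoint dform (k : nat) (u v : Lsp) : K :=
  match k with
  | 0 => 0
  | k'.+1 =>
      coord u.1 k' * coord v.2 k' + coord v.1 k' * coord u.2 k'
      + dform k' (proj k' u) (proj k' v)
  end.

(* bracket of A_k, obtained by iterated double extension from A_0 = 0 *)
Fixpoint dbr (k : nat) (u v : Lsp) : Lsp :=
  match k with
  | 0 => 0
  | k'.+1 =>
      let a := proj k' u in let a' := proj k' v in
      coord u.1 k' *: dmap k' a' - coord v.1 k' *: dmap k' a + dbr k' a a'
      + dform k' (dmap k' a) a' *: bsL k'
  end.

Definition is_chain : Prop :=
  forall k, (k < n)%N ->
    (forall (al : K) a b, inA k a -> inA k b ->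
        dmap k (al *: a + b) = al *: dmap k a + dmap k b) /\
    (forall a, inA k a -> inA k (dmap k a)) /\
    (forall a b, inA k a -> inA k b ->
        dmap k (dbr k a b) = dbr k (dmap k a) b + dbr k a (dmap k b)) /\
    (forall a b, inA k a -> inA k b ->
        dform k (dmap k a) b + dform k a (dmap k b) = 0).

Definition NNP : Prop := exists k, (k < n)%N /\ exists a, inA k a /\ dmap k a != 0.

Definition TwoSP : Prop :=
  forall k, (1 <= k < n)%N ->
    (forall a, inA k a -> inA2 k (dmap k a)) /\
    (forall a, inA2 k a -> dmap k a = 0).

Definition Mfam (i : 'I_n) : 'M[K]_n := \matrix_(k < n, j < n) cc i j k.

Definition n_quadratic (M : 'I_n -> 'M[K]_n) : Prop :=
  (forall i, (M i)^T = - M i) /\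
  (forall i k, M i k i = 0) /\
  (forall i j : 'I_n, (i < j)%N -> forall k, M i k j = - M j k i).

Definition non_null (M : 'I_n -> 'M[K]_n) : Prop := exists i, M i != 0.

(* quadratic algebra defined by the family: v_i = (b_i,0), z_i = (0,b_i^* ),
   [v_i,v_j] = sum_k m_ijk z_k with m_ijk = (M i) k j, extended bilinearly *)
Definition quad_br (M : 'I_n -> 'M[K]_n) (u v : Lsp) : Lsp :=
  (0, \sum_(i < n) \sum_(j < n) (u.1 0 i * v.1 0 j) *: \row_(k < n) M i k j).
Definition quad_form (u v : Lsp) : K :=
  \sum_(i < n) (u.1 0 i * v.2 0 i + u.2 0 i * v.1 0 i).

End Concrete.

From Pilot Require Import Defs.
From HB Require Import structures.
From mathcomp Require Import all_boot all_order all_algebra.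
From mathcomp Require Import zify ring.
Import GRing.Theory.
Local Open Scope ring_scope.
Set Implicit Arguments. Unset Strict Implicit.

(* Each of (a)-(d) says that the structure constants [c_ijk] form a nonzero trilinear form
   that is skew in [(i, j)] and in [(j, k)], i.e. alternating; in characteristic zero this
   kills every constant with a repeated index. For (a) and (b) this is antisymmetry of [w]
   together with invariance, resp. cyclicity, of the form; (d) transcribes it entrywise.
   In (c) all brackets land in the span of the [b_i^*], so every [d_k] is automatically a
   derivation satisfying (2SP), and [d_k] is [f_k]-skew iff [c_kjl] is skew in [(j, l)] for
   [j, l < k]. The bracket built by the chain has constants read off at the step given by
   the largest of the three indices; these are alternating once every [d_k] is [f_k]-skew,
   and coincide with [c_pqm] when [c] is alternating. *)

Lemma pchar0_eqN_eq0 (K : fieldType) (V : lmodType K) :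
  [pchar K] =i pred0 -> forall v : V, v = - v -> v = 0.
Proof.
move=> hK v hv; have /eqP : 2%:R *: v = 0 by rewrite scaler_nat mulr2n {1}hv addNr.
rewrite scaler_eq0 => /orP[/eqP two0 | /eqP //].
by move: (hK 2); rewrite !inE two0 eqxx.
Qed.

Section TruncatedSums.
Variables (R : nmodType) (n : nat).

Lemma sum_ltS k (hk : (k < n)%N) (F : 'I_n -> R) :
  \sum_(l < n | (l < k.+1)%N) F l = \sum_(l < n | (l < k)%N) F l + F (Ordinal hk).
Proof.
rewrite (bigD1 (Ordinal hk)) //= addrC; congr (_ + _); apply: eq_bigl => l.
by rewrite -val_eqE /= ltnS ltn_neqAle andbC.
Qed.

Lemma sum_ltn (F : 'I_n -> R) : \sum_(l < n | (l < n)%N) F l = \sum_(l < n) F l.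
Proof. by apply: eq_bigl => l; rewrite ltn_ord. Qed.

Lemma sum_ltS2 k (hk : (k < n)%N) (F : 'I_n -> 'I_n -> R) :
  \sum_(p < n | (p < k.+1)%N) \sum_(q < n | (q < k.+1)%N) F p q =
  \sum_(p < n | (p < k)%N) \sum_(q < n | (q < k)%N) F p q
  + \sum_(p < n | (p < k)%N) F p (Ordinal hk) + \sum_(q < n | (q < k)%N) F (Ordinal hk) q
  + F (Ordinal hk) (Ordinal hk).
Proof.
rewrite sum_ltS (eq_bigr (fun p => \sum_(q < n | (q < k)%N) F p q + F p (Ordinal hk))).
  by rewrite big_split sum_ltS /= !addrA.
by move=> p _; rewrite sum_ltS.
Qed.

End TruncatedSums.

Section Pairing.
Variables (K : fieldType) (n : nat).
Implicit Types (x y z : 'rV[K]_n).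

Lemma bvecE (i : 'I_n) : bvec K n i = 'e_i.
Proof. by apply/rowP => j; rewrite !mxE eqxx. Qed.

Lemma sum_bvec (l : 'I_n) (P : pred 'I_n) (F : 'I_n -> K) :
  \sum_(t < n | P t) bvec K n l 0 t * F t = if P l then F l else 0.
Proof.
case: ifP => Pl.
  rewrite (bigD1 l) //= mxE eqxx mul1r big1 ?addr0 // => t /andP[_ tl].
  by rewrite mxE -[_ == _ :> nat]/(t == l) (negbTE tl) mul0r.
apply: big1 => t Pt; rewrite mxE.
by case: eqP => [/ord_inj tl | _]; [rewrite tl Pl in Pt | rewrite mul0r].
Qed.

Lemma sum_bvec2 (j l : 'I_n) (P : pred 'I_n) (F : 'I_n -> 'I_n -> K) : P j -> P l ->
  \sum_(t < n | P t) \sum_(s < n | P s) bvec K n j 0 s * bvec K n l 0 t * F s t = F j l.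
Proof.
move=> Pj Pl; transitivity (\sum_(t < n | P t) bvec K n l 0 t * F j t); last first.
  by rewrite sum_bvec Pl.
apply: eq_bigr => t _.
rewrite (eq_bigr (fun s => bvec K n j 0 s * (bvec K n l 0 t * F s t))) => [|s _]; last first.
  by rewrite mulrA.
by rewrite sum_bvec Pj.
Qed.

Lemma dpair_bvec x (i : 'I_n) : dpair x (bvec K n i) = x 0 i.
Proof. by rewrite /dpair (eq_bigr _ (fun t _ => mulrC _ _)) sum_bvec. Qed.

Lemma dpairC x y : dpair x y = dpair y x.
Proof. by apply: eq_bigr => i _; rewrite mulrC. Qed.

Lemma dpair0l y : dpair 0 y = 0.
Proof. by rewrite /dpair big1 // => i _; rewrite mxE mul0r. Qed.

Lemma dpairNl x y : dpair (- x) y = - dpair x y.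
Proof. by rewrite /dpair -sumrN; apply: eq_bigr => i _; rewrite mxE mulNr. Qed.

Lemma dpairDl x y z : dpair (x + y) z = dpair x z + dpair y z.
Proof. by rewrite /dpair -big_split; apply: eq_bigr => i _; rewrite mxE mulrDl. Qed.

Lemma dpairZl (c : K) x z : dpair (c *: x) z = c * dpair x z.
Proof. by rewrite /dpair mulr_sumr; apply: eq_bigr => i _; rewrite mxE mulrA. Qed.

Lemma dpair0r x : dpair x 0 = 0.
Proof. by rewrite dpairC dpair0l. Qed.

Lemma dpairDr x y z : dpair z (x + y) = dpair z x + dpair z y.
Proof. by rewrite dpairC dpairDl !(dpairC z). Qed.

Lemma dpairZr (c : K) x z : dpair z (c *: x) = c * dpair z x.
Proof. by rewrite dpairC dpairZl dpairC. Qed.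

Lemma Lsp_ext (u v : Lsp K n) : u.1 = v.1 -> u.2 = v.2 -> u = v.
Proof. by case: u v => ? ? [? ?] /= -> ->. Qed.

End Pairing.

Section StructureConstants.
Variables (K : fieldType) (n : nat) (w : 'rV[K]_n -> 'rV[K]_n -> 'rV[K]_n).
Hypothesis hw : bilinear_op w.

Lemma wDl x y b : w (x + y) b = w x b + w y b.
Proof. by have := hw.1 1 x y b; rewrite !scale1r. Qed.

Lemma wDr a x y : w a (x + y) = w a x + w a y.
Proof. by have := hw.2 1 a x y; rewrite !scale1r. Qed.

Lemma w0l b : w 0 b = 0.
Proof. by apply/(addrI (w 0 b)); rewrite -wDl !addr0. Qed.

Lemma w0r a : w a 0 = 0.
Proof. by apply/(addrI (w a 0)); rewrite -wDr !addr0. Qed.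

Lemma wZl c x b : w (c *: x) b = c *: w x b.
Proof. by have := hw.1 c x 0 b; rewrite !addr0 w0l addr0. Qed.

Lemma wZr c a x : w a (c *: x) = c *: w a x.
Proof. by have := hw.2 c a x 0; rewrite !addr0 w0r addr0. Qed.

Lemma w_suml I (r : seq I) (P : pred I) (F : I -> 'rV[K]_n) b :
  w (\sum_(i <- r | P i) F i) b = \sum_(i <- r | P i) w (F i) b.
Proof. exact: (big_morph (w^~ b) (fun x y => wDl x y b) (w0l b)). Qed.

Lemma w_sumr I (r : seq I) (P : pred I) (F : I -> 'rV[K]_n) a :
  w a (\sum_(i <- r | P i) F i) = \sum_(i <- r | P i) w a (F i).
Proof. exact: (big_morph (w a) (wDr a) (w0r a)). Qed.

Lemma ccE i j (k : 'I_n) : cc w i j k = w (bvec K n i) (bvec K n j) 0 k.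
Proof. exact: dpair_bvec. Qed.

Lemma coord_w a b (m : 'I_n) :
  w a b 0 m = \sum_(i < n) \sum_(j < n) a 0 i * b 0 j * cc w i j m.
Proof.
rewrite {1}(row_sum_delta a) w_suml summxE; apply: eq_bigr => i _.
rewrite wZl {1}(row_sum_delta b) w_sumr mxE summxE mulr_sumr; apply: eq_bigr => j _.
by rewrite wZr mxE ccE !bvecE mulrA.
Qed.

Lemma dpair_w a b c : dpair (w a b) c =
  \sum_(i < n) \sum_(j < n) \sum_(m < n) a 0 i * b 0 j * c 0 m * cc w i j m.
Proof.
transitivity (\sum_(m < n) \sum_(i < n) \sum_(j < n) a 0 i * b 0 j * c 0 m * cc w i j m).
  apply: eq_bigr => m _; rewrite coord_w mulr_suml; apply: eq_bigr => i _.
  by rewrite mulr_suml; apply: eq_bigr => j _; ring.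
by rewrite exchange_big; apply: eq_bigr => i _; rewrite exchange_big.
Qed.

Definition skew_cc : Prop :=
  forall i j k : 'I_n, cc w i j k = - cc w j i k /\ cc w i j k = - cc w i k j.

Definition cc_nonzero : Prop := exists i j k : 'I_n, cc w i j k != 0.

Definition alternating_w : Prop :=
  (forall a b, w a b = - w b a) /\ (forall a b c, dpair (w a b) c = - dpair (w a c) b).

Lemma alternating_wP : alternating_w <-> skew_cc.
Proof.
split=> [[anti inv] i j k | skew].
  by split; [rewrite /cc anti dpairNl | exact: inv].
split=> [a b | a b c].
  apply/rowP => m; rewrite mxE !coord_w [in RHS]exchange_big -sumrN.
  apply: eq_bigr => i _; rewrite -sumrN; apply: eq_bigr => j _.
  by rewrite (skew i j m).1; ring.
rewrite !dpair_w -sumrN; apply: eq_bigr => i _.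
rewrite [in RHS]exchange_big -sumrN; apply: eq_bigr => j _; rewrite -sumrN.
by apply: eq_bigr => m _; rewrite (skew i j m).2; ring.
Qed.

Lemma cc_nonzeroP : cc_nonzero <-> ~ (forall i j k : 'I_n, cc w i j k = 0).
Proof.
split=> [[i [j [k /eqP cc_ijk]]] cc0 | not_cc0]; first exact: cc_ijk (cc0 i j k).
have [/existsP[i /existsP[j /existsP[k cc_ijk]]] | /existsPn cc0] :=
  boolP [exists i : 'I_n, exists j : 'I_n, exists k : 'I_n, cc w i j k != 0].
  by exists i, j, k.
case: not_cc0 => i j k; apply/eqP.
by move: (cc0 i) => /existsPn/(_ j)/existsPn/(_ k)/negbNE.
Qed.

Lemma w_neq0P : (exists a b, w a b != 0) <-> cc_nonzero.
Proof.
split=> [[a [b /eqP wab]] | [i [j [k cc_ijk]]]].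
  apply/cc_nonzeroP => cc0; apply: wab; apply/rowP => m.
  by rewrite coord_w mxE big1 // => i _; rewrite big1 // => j _; rewrite cc0 mulr0.
by exists (bvec K n i), (bvec K n j); apply: contraNneq cc_ijk; rewrite /cc => ->; rewrite dpair0l.
Qed.

Lemma alternating_nonzeroP :
  alternating_w /\ (exists a b, w a b != 0) <-> skew_cc /\ cc_nonzero.
Proof. by split=> [[/alternating_wP ? /w_neq0P ?] | [/alternating_wP ? /w_neq0P ?]]. Qed.

End StructureConstants.

Section SkewConstants.
Variables (K : fieldType) (n : nat) (w : 'rV[K]_n -> 'rV[K]_n -> 'rV[K]_n).
Hypotheses (hK : [pchar K] =i pred0) (skew : skew_cc w).

Lemma cc_diag12 (i k : 'I_n) : cc w i i k = 0.
Proof. exact: (pchar0_eqN_eq0 (V := K^o) hK (skew i i k).1). Qed.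

Lemma cc_diag23 (i j : 'I_n) : cc w i j j = 0.
Proof. exact: (pchar0_eqN_eq0 (V := K^o) hK (skew i j j).2). Qed.

Lemma cc_diag13 (i j : 'I_n) : cc w i j i = 0.
Proof. by rewrite (skew i j i).2 cc_diag12 oppr0. Qed.

Lemma cc_cycle (i j k : 'I_n) : cc w i j k = cc w k i j.
Proof. by rewrite (skew i j k).2 (skew i k j).1 opprK. Qed.

End SkewConstants.

Section QuadraticLie.
Variables (K : fieldType) (n : nat) (w : 'rV[K]_n -> 'rV[K]_n -> 'rV[K]_n).
Hypotheses (hK : [pchar K] =i pred0) (hw : bilinear_op w).

Lemma Lbr_nil x y z : Lbr w x (Lbr w y z) = 0.
Proof. by rewrite /Lbr /= w0r. Qed.

Lemma Lbr_lie : alternating_w w -> is_lie_algebra (Lbr w).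
Proof.
move=> [anti _]; split; [split|split].
- by move=> a x y z; apply: Lsp_ext => /=; [rewrite scaler0 addr0 | exact: hw.1].
- by move=> a x y z; apply: Lsp_ext => /=; [rewrite scaler0 addr0 | exact: hw.2].
- by move=> x; apply: Lsp_ext => //=; apply: (pchar0_eqN_eq0 hK); apply: anti.
- by move=> x y z; rewrite !Lbr_nil !addr0.
Qed.

Lemma Lform_bilinear : bilinear_form (@Lform K n).
Proof. by split=> a x y z; rewrite /Lform /= dpairDl dpairZl !dpairDr dpairZr; ring. Qed.

Lemma LformC (x y : Lsp K n) : Lform x y = Lform y x.
Proof. by rewrite /Lform addrC. Qed.

Lemma Lform_nondeg (x : Lsp K n) : (forall y, Lform x y = 0) -> x = 0.
Proof.
move=> x0; apply: Lsp_ext; apply/rowP => m; rewrite mxE.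
  by have := x0 (0, bvec K n m); rewrite /Lform /= dpair0r add0r dpairC dpair_bvec.
by have := x0 (bvec K n m, 0); rewrite /Lform /= dpair0l addr0 dpair_bvec.
Qed.

Lemma quadratic_lieP :
  is_quadratic_lie (Lbr w) (@Lform K n) /\ two_step_nilpotent (Lbr w) <->
  alternating_w w /\ exists a b, w a b != 0.
Proof.
split=> [[[[_ [br_xx _]] [_ [_ [_ inv]]]] [_ [x [y xy]]]] | [alt [a [b ab]]]].
  have w_aa a : w a a = 0 by have /(congr1 snd) := br_xx (a, 0).
  split; [split=> [a b | a b c] | exists x.1, y.1].
  - apply/eqP; rewrite -addr_eq0 -(w_aa (a + b)) (wDl hw) !(wDr hw).
    by rewrite !w_aa addr0 add0r.
  - apply/eqP; rewrite -addr_eq0; have := inv (a, 0) (b, 0) (c, 0).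
    by rewrite /Lform /= !dpair0l addr0 add0r => ->.
  - by apply: contraNneq xy; rewrite /Lbr => ->.
split; split.
- exact: Lbr_lie.
- split; first exact: Lform_bilinear.
  split; first exact: LformC.
  split; first exact: Lform_nondeg.
  by move=> x y z; rewrite /Lform /= !dpair0r add0r addr0 alt.2 addNr.
- exact: Lbr_nil.
- by exists (a, 0), (b, 0); apply: contraNneq ab => /(congr1 snd) /= ->.
Qed.

End QuadraticLie.

Section TStarExtension.
Variables (K : fieldType) (n : nat) (w : 'rV[K]_n -> 'rV[K]_n -> 'rV[K]_n).
Hypothesis hw : bilinear_op w.

Lemma alternating_cyclic : alternating_w w -> forall a b c, dpair (w a b) c = dpair (w c a) b.
Proof. by move=> [anti inv] a b c; rewrite inv anti dpairNl opprK. Qed.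

Lemma tstarP :
  (cocycle_abelian w /\ cyclic_w w /\ (exists a b, w a b != 0) /\
   forall u v, Lbr w u v = tstar_br w u v /\ Lform u v = tstar_form u v) <->
  alternating_w w /\ exists a b, w a b != 0.
Proof.
split=> [[[_ anti] [cyc [nz _]]] | [alt nz]].
  split; last exact: nz.
  split=> [|a b c]; first exact: anti.
  by rewrite (cyc a c b).1 anti dpairNl.
split; first exact: (conj hw alt.1).
split; first by move=> a b c; split; apply: alternating_cyclic.
by split; first exact: nz.
Qed.

End TStarExtension.

Section QuadraticFamily.
Variables (K : fieldType) (n : nat) (w : 'rV[K]_n -> 'rV[K]_n -> 'rV[K]_n).
Hypotheses (hK : [pchar K] =i pred0) (hw : bilinear_op w).

Lemma quad_algebraE u v :
  quad_br (Mfam w) u v = Lbr w u v /\ quad_form u v = Lform u v.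
Proof.
split.
  apply: Lsp_ext => //=; apply/rowP => m; rewrite (coord_w hw) summxE.
  by apply: eq_bigr => i _; rewrite summxE; apply: eq_bigr => j _; rewrite !mxE.
by rewrite /quad_form /Lform /dpair -big_split; apply: eq_bigr => i _ /=; ring.
Qed.

Lemma n_quadraticP : n_quadratic (Mfam w) <-> skew_cc w.
Proof.
split=> [[Mtr [Mdiag Mlt]] i j k | skew].
  split; last by have /matrixP/(_ j k) := Mtr i; rewrite !mxE.
  case: (ltngtP i j) => [ij | ji | /val_inj ij].
  - by have := Mlt i j ij k; rewrite !mxE.
  - by have := Mlt j i ji k; rewrite !mxE => ->; rewrite opprK.
  - by subst j; have := Mdiag i k; rewrite mxE => ->; rewrite oppr0.
split; first by move=> i; apply/matrixP => k j; rewrite !mxE (skew i k j).2.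
split; first by move=> i k; rewrite mxE (cc_diag12 hK skew).
by move=> i j _ k; rewrite !mxE (skew i j k).1.
Qed.

Lemma non_nullP : non_null (Mfam w) <-> cc_nonzero w.
Proof.
split=> [[i /eqP Mi] | [i [j [k cc_ijk]]]].
  apply/cc_nonzeroP => cc0; apply: Mi; apply/matrixP => k j.
  by rewrite !mxE cc0.
by exists i; apply: contraNneq cc_ijk => /matrixP/(_ k j); rewrite !mxE => ->.
Qed.

Lemma quadratic_familyP :
  (n_quadratic (Mfam w) /\ non_null (Mfam w) /\
   forall u v, quad_br (Mfam w) u v = Lbr w u v /\ quad_form u v = Lform u v) <->
  skew_cc w /\ cc_nonzero w.
Proof.
split=> [[Mq [Mnz _]] | [skew nz]]; first by split; [apply/n_quadraticP | apply/non_nullP].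
by split; [apply/n_quadraticP | split; [apply/non_nullP | exact: quad_algebraE]].
Qed.

End QuadraticFamily.

Section DoubleExtension.
Variables (K : fieldType) (n : nat) (w : 'rV[K]_n -> 'rV[K]_n -> 'rV[K]_n).
Hypotheses (hK : [pchar K] =i pred0) (hw : bilinear_op w).
Implicit Types (u v a b : Lsp K n).

Lemma proj_fst k u (l : 'I_n) : (proj k u).1 0 l = if (l < k)%N then u.1 0 l else 0.
Proof. by rewrite mxE. Qed.

Lemma coord_ord (x : 'rV[K]_n) k (hk : (k < n)%N) : Defs.coord x k = x 0 (Ordinal hk).
Proof. exact: (dpair_bvec x (Ordinal hk)). Qed.

Lemma dmap_snd k a (m : 'I_n) : (dmap w k a).2 0 m =
  if (m < k)%N then \sum_(j < n | (j < k)%N) cc w k j m * a.1 0 j else 0.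
Proof.
rewrite /dmap /= summxE.
rewrite (eq_bigr (fun l => bvec K n m 0 l * \sum_(j < n | (j < k)%N) cc w k j l * a.1 0 j)).
  by rewrite sum_bvec.
by move=> l _; rewrite !mxE eq_sym mulrC.
Qed.

Lemma dformE k u v : (k <= n)%N ->
  dform k u v = \sum_(l < n | (l < k)%N) (u.1 0 l * v.2 0 l + v.1 0 l * u.2 0 l).
Proof.
elim: k u v => [|k IH] u v hk /=; first by rewrite big_pred0 // => l; rewrite ltn0.
rewrite IH ?(ltnW hk) // sum_ltS addrC !coord_ord; congr (_ + _).
by apply: eq_bigr => l lk; rewrite !proj_fst !mxE lk.
Qed.

Lemma dformC k u v : (k <= n)%N -> dform k u v = dform k v u.
Proof. by move=> hk; rewrite !dformE //; apply: eq_bigr => l _; rewrite addrC. Qed.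

Lemma dform_dmap k a b : (k <= n)%N -> dform k (dmap w k a) b =
  \sum_(l < n | (l < k)%N) \sum_(j < n | (j < k)%N) a.1 0 j * b.1 0 l * cc w k j l.
Proof.
move=> hk; rewrite dformE //; apply: eq_bigr => l lk.
rewrite mxE mul0r add0r dmap_snd lk mulr_sumr; apply: eq_bigr => j _; ring.
Qed.

Lemma dform_full u v : dform n u v = Lform u v.
Proof. by rewrite dformE // sum_ltn /Lform /dpair -big_split; apply: eq_bigr => i _ /=; ring. Qed.

(* At step [k] the chain contributes [c_kjl] to [[b_k, b_j]] along [b_l^*] for [j, l < k],
   so the largest of [p, q, m] decides which term of [ext_cc p q m] is present. *)
Definition ext_cc (p q m : nat) : K :=
  (if (q < p)%N && (m < p)%N then cc w p q m else 0)
  - (if (p < q)%N && (m < q)%N then cc w q p m else 0)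
  + (if (p < m)%N && (q < m)%N then cc w m p q else 0).

Lemma ext_cc_max1 p q m : (q < p)%N -> (m < p)%N -> ext_cc p q m = cc w p q m.
Proof.
move=> qp mp; rewrite /ext_cc qp mp /= ifF ?ifF ?subr0 ?addr0 //; lia.
Qed.

Lemma ext_cc_max2 p q m : (p < q)%N -> (m < q)%N -> ext_cc p q m = - cc w q p m.
Proof.
move=> pq mq; rewrite /ext_cc pq mq /= ifF ?ifF ?sub0r ?addr0 //; lia.
Qed.

Lemma ext_cc_max3 p q m : (p < m)%N -> (q < m)%N -> ext_cc p q m = cc w m p q.
Proof.
move=> pm qm; rewrite /ext_cc pm qm /= ifF ?ifF ?subr0 ?add0r //; lia.
Qed.

Lemma ext_cc_tie p q m : ~~ ((q < p)%N && (m < p)%N) -> ~~ ((p < q)%N && (m < q)%N) ->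
  ~~ ((p < m)%N && (q < m)%N) -> ext_cc p q m = 0.
Proof. by rewrite /ext_cc => /negbTE-> /negbTE-> /negbTE->; rewrite subrr addr0. Qed.

Lemma dbr_fst k u v : (dbr w k u v).1 = 0.
Proof. by elim: k u v => [|k IH] u v //=; rewrite IH !scaler0 subrr !addr0. Qed.

Lemma dmap_proj k a : dmap w k (proj k a) = dmap w k a.
Proof.
congr pair; apply: eq_bigr => m _; congr (_ *: _).
by apply: eq_bigr => j jk; rewrite proj_fst jk.
Qed.

Lemma dbrS_snd k u v (m : 'I_n) : (dbr w k.+1 u v).2 0 m =
  Defs.coord u.1 k * (dmap w k (proj k v)).2 0 m
  - Defs.coord v.1 k * (dmap w k (proj k u)).2 0 m
  + (dbr w k (proj k u) (proj k v)).2 0 m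
  + dform k (dmap w k (proj k u)) (proj k v) * bvec K n k 0 m.
Proof. by rewrite !mxE. Qed.

Lemma dbr_snd k u v (m : 'I_n) : (k <= n)%N -> (dbr w k u v).2 0 m =
  if (m < k)%N then
    \sum_(p < n | (p < k)%N) \sum_(q < n | (q < k)%N) u.1 0 p * v.1 0 q * ext_cc p q m
  else 0.
Proof.
elim: k u v m => [|k IH] u v m hk; first by rewrite ltn0 mxE.
rewrite dbrS_snd !dmap_proj !dmap_snd IH ?(ltnW hk) // dform_dmap ?(ltnW hk) // !coord_ord mxE.
have proj_ext : \sum_(p < n | (p < k)%N) \sum_(q < n | (q < k)%N)
    (proj k u).1 0 p * (proj k v).1 0 q * ext_cc p q m =
  \sum_(p < n | (p < k)%N) \sum_(q < n | (q < k)%N) u.1 0 p * v.1 0 q * ext_cc p q m.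
  by apply: eq_bigr => p pk; apply: eq_bigr => q qk; rewrite !proj_fst pk qk.
have proj_cc : \sum_(l < n | (l < k)%N) \sum_(j < n | (j < k)%N)
    u.1 0 j * (proj k v).1 0 l * cc w k j l =
  \sum_(l < n | (l < k)%N) \sum_(j < n | (j < k)%N) u.1 0 j * v.1 0 l * cc w k j l.
  by apply: eq_bigr => l lk; apply: eq_bigr => j _; rewrite proj_fst lk.
rewrite proj_ext proj_cc sum_ltS2; set kk := Ordinal hk.
case: (ltngtP m k) => [mk | km | mk].
- rewrite ltnS (ltnW mk) mulr0 addr0 (ext_cc_tie (p := k)) /= ?mulr0 ?addr0; try lia.
  have col : \sum_(q < n | (q < k)%N) u.1 0 kk * v.1 0 q * ext_cc k q m =
      \sum_(q < n | (q < k)%N) u.1 0 kk * (cc w k q m * v.1 0 q).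
    by apply: eq_bigr => q qk; rewrite ext_cc_max1 //; ring.
  have row : \sum_(p < n | (p < k)%N) u.1 0 p * v.1 0 kk * ext_cc p k m =
      \sum_(p < n | (p < k)%N) - (v.1 0 kk * (cc w k p m * u.1 0 p)).
    by apply: eq_bigr => p pk; rewrite ext_cc_max2 //; ring.
  rewrite !mulr_sumr -sumrN col row; ring.
- by rewrite ifF; [rewrite mulr0n; ring | lia].
- rewrite mk ltnSn.
  have top : \sum_(p < n | (p < k)%N) \sum_(q < n | (q < k)%N) u.1 0 p * v.1 0 q * ext_cc p q k =
      \sum_(l < n | (l < k)%N) \sum_(j < n | (j < k)%N) u.1 0 j * v.1 0 l * cc w k j l.
    by rewrite exchange_big; apply: eq_bigr => q qk; apply: eq_bigr => p pk; rewrite ext_cc_max3.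
  have row : \sum_(p < n | (p < k)%N) u.1 0 p * v.1 0 kk * ext_cc p k k = 0.
    by apply: big1 => p pk; rewrite ext_cc_tie ?mulr0 //=; lia.
  have col : \sum_(q < n | (q < k)%N) u.1 0 kk * v.1 0 q * ext_cc k q k = 0.
    by apply: big1 => q qk; rewrite ext_cc_tie ?mulr0 //=; lia.
  rewrite top row col ext_cc_tie /=; [ring | lia..].
Qed.

Definition lower_skew_cc : Prop :=
  forall k j l : 'I_n, (j < k)%N -> (l < k)%N -> cc w k j l = - cc w k l j.

Lemma dmap_eq0 k a : a.1 = 0 -> dmap w k a = 0.
Proof.
move=> a0; apply: Lsp_ext => //; apply/rowP => m; rewrite dmap_snd mxE.
by case: ifP => // _; apply: big1 => j _; rewrite a0 mxE mulr0.
Qed.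

Lemma dbr_eq0l k u v : (k <= n)%N -> u.1 = 0 -> dbr w k u v = 0.
Proof.
move=> kn u0; apply: Lsp_ext; first exact: dbr_fst.
apply/rowP => m; rewrite dbr_snd // mxE; case: ifP => // _.
by apply: big1 => p _; apply: big1 => q _; rewrite u0 mxE !mul0r.
Qed.

Lemma dbr_eq0r k u v : (k <= n)%N -> v.1 = 0 -> dbr w k u v = 0.
Proof.
move=> kn v0; apply: Lsp_ext; first exact: dbr_fst.
apply/rowP => m; rewrite dbr_snd // mxE; case: ifP => // _.
by apply: big1 => p _; apply: big1 => q _; rewrite v0 mxE mulr0 mul0r.
Qed.

Lemma dmap_inA k a : inA k (dmap w k a).
Proof.
apply: Lsp_ext; apply/rowP => m; rewrite !mxE; first by case: ifP.
by case: ifP => // mk; rewrite dmap_snd mk.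
Qed.

Lemma inA_bL k (j : 'I_n) : (j < k)%N -> inA k (bL K n j).
Proof.
move=> jk; apply: Lsp_ext; apply/rowP => t; rewrite !mxE; last by case: ifP.
by case: ifP => // tk; case: eqP => // tj; lia.
Qed.

Lemma dmap_skewP k : (k < n)%N ->
  (forall a b, inA k a -> inA k b -> dform k (dmap w k a) b + dform k a (dmap w k b) = 0) <->
  forall j l : 'I_n, (j < k)%N -> (l < k)%N -> cc w k j l = - cc w k l j.
Proof.
move=> kn; split=> [skew j l jk lk | lower a b _ _].
  have := skew _ _ (inA_bL jk) (inA_bL lk).
  rewrite (dformC (bL K n j)) ?(ltnW kn) // !dform_dmap ?(ltnW kn) //.
  rewrite !(sum_bvec2 (P := fun t : 'I_n => (t < k)%N) (cc w k)) //.
  by move/eqP; rewrite addr_eq0 => /eqP.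
rewrite (dformC a) ?(ltnW kn) // !dform_dmap ?(ltnW kn) // [X in _ + X]exchange_big /=.
rewrite -big_split big1 // => l lk; rewrite -big_split big1 //= => j jk.
by rewrite (lower j l) //; ring.
Qed.

Lemma is_chainP : is_chain w <-> lower_skew_cc.
Proof.
split=> [chain k | lower k kn].
  exact: (dmap_skewP (ltn_ord k)).1 (chain k (ltn_ord k)).2.2.2.
split; [|split; [exact: (fun a _ => dmap_inA k a) | split]].
- move=> al a b _ _; apply: Lsp_ext; first by rewrite /= scaler0 addr0.
  transitivity (al *: (dmap w k a).2 + (dmap w k b).2) => //.
  apply/rowP => m; rewrite !mxE !dmap_snd; case: ifP => _; last by rewrite mulr0 addr0.
  rewrite mulr_sumr -big_split /=; apply: eq_bigr => j _; rewrite !mxE; ring.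
- move=> a b _ _; rewrite dmap_eq0 ?dbr_fst // dbr_eq0l ?dbr_eq0r ?addr0 ?(ltnW kn) //.
- by apply: (dmap_skewP kn).2 => j l; apply: (lower (Ordinal kn)).
Qed.

Lemma two_sp : TwoSP w.
Proof.
move=> k _; split=> [a _ | a [a0 _]]; last exact: dmap_eq0.
by split; [| exact: dmap_inA].
Qed.

Lemma ext_cc_skew : lower_skew_cc ->
  forall p q m : 'I_n, ext_cc p q m = - ext_cc q p m /\ ext_cc p q m = - ext_cc p m q.
Proof.
move=> lower p q m.
have [/andP[qp mp] | not_p] := boolP ((q < p)%N && (m < p)%N).
  by rewrite ext_cc_max1 // ext_cc_max2 // ext_cc_max1 // (lower p q m) // opprK.
have [/andP[pq mq] | not_q] := boolP ((p < q)%N && (m < q)%N).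
  by rewrite ext_cc_max2 // ext_cc_max1 // ext_cc_max3 // opprK.
have [/andP[pm qm] | not_m] := boolP ((p < m)%N && (q < m)%N).
  by rewrite ext_cc_max3 // ext_cc_max3 // ext_cc_max2 // (lower m q p) // opprK.
by rewrite !ext_cc_tie ?oppr0 //; lia.
Qed.

Lemma ext_cc_cc : skew_cc w -> forall p q m : 'I_n, ext_cc p q m = cc w p q m.
Proof.
move=> skew p q m.
have [/andP[qp mp] | not_p] := boolP ((q < p)%N && (m < p)%N); first exact: ext_cc_max1.
have [/andP[pq mq] | not_q] := boolP ((p < q)%N && (m < q)%N).
  by rewrite ext_cc_max2 // (skew p q m).1.
have [/andP[pm qm] | not_m] := boolP ((p < m)%N && (q < m)%N).
  by rewrite ext_cc_max3 // (cc_cycle skew p q m).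
rewrite ext_cc_tie //; have : [|| p == q :> nat, q == m :> nat | p == m :> nat] by lia.
by case/or3P => /eqP/ord_inj <-; rewrite ?cc_diag12 ?cc_diag23 ?cc_diag13.
Qed.

Lemma dbr_full_snd u v (m : 'I_n) :
  (dbr w n u v).2 0 m = \sum_(p < n) \sum_(q < n) u.1 0 p * v.1 0 q * ext_cc p q m.
Proof. by rewrite dbr_snd // ltn_ord sum_ltn; apply: eq_bigr => p _; rewrite sum_ltn. Qed.

Lemma dbr_fullP :
  (forall u v, dbr w n u v = Lbr w u v) <-> forall p q m : 'I_n, ext_cc p q m = cc w p q m.
Proof.
split=> [full p q m | ext u v].
  have := congr1 (fun x : Lsp K n => x.2 0 m) (full (bL K n p) (bL K n q)).
  rewrite /= dbr_full_snd exchange_big (sum_bvec2 (P := predT)) //= => ->.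
  by rewrite ccE.
apply: Lsp_ext; first exact: dbr_fst.
apply/rowP => m; rewrite dbr_full_snd /= (coord_w hw).
by apply: eq_bigr => p _; apply: eq_bigr => q _; rewrite ext.
Qed.

Lemma NNP_nonzero : NNP w -> cc_nonzero w.
Proof.
move=> [k [kn [a [_ /eqP dmap_a]]]]; apply/cc_nonzeroP => cc0; apply: dmap_a.
apply: Lsp_ext => //; apply/rowP => m; rewrite dmap_snd mxE; case: ifP => // _.
by apply: big1 => j _; rewrite (cc0 (Ordinal kn)) mul0r.
Qed.

Lemma NNP_of_cc (k j l : 'I_n) : (j < k)%N -> (l < k)%N -> cc w k j l != 0 -> NNP w.
Proof.
move=> jk lk cc_kjl; exists k; split=> //; exists (bL K n j); split; first exact: inA_bL.
apply: contraNneq cc_kjl => /(congr1 (fun x : Lsp K n => x.2 0 l)).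
by rewrite dmap_snd lk mxE (eq_bigr _ (fun i _ => mulrC _ _)) /= sum_bvec jk => ->.
Qed.

Lemma skew_cc_nonzero_lower : skew_cc w -> cc_nonzero w ->
  exists k j l : 'I_n, [/\ (j < k)%N, (l < k)%N & cc w k j l != 0].
Proof.
move=> skew [i [j [m cc_ijm]]].
have [/andP[ji mi] | not_i] := boolP ((j < i)%N && (m < i)%N); first by exists i, j, m.
have [/andP[ij mj] | not_j] := boolP ((i < j)%N && (m < j)%N).
  by exists j, i, m; split=> //; rewrite -oppr_eq0 -(skew i j m).1.
have [/andP[im jm] | not_m] := boolP ((i < m)%N && (j < m)%N).
  by exists m, i, j; split=> //; rewrite -(cc_cycle skew).
have : [|| i == j :> nat, j == m :> nat | i == m :> nat] by lia.
by case/or3P => /eqP/ord_inj ij; rewrite ij ?cc_diag12 ?cc_diag23 ?cc_diag13 ?eqxx in cc_ijm.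
Qed.

Lemma double_extensionP :
  (is_chain w /\ NNP w /\ TwoSP w /\
   forall u v, dbr w n u v = Lbr w u v /\ dform n u v = Lform u v) <->
  skew_cc w /\ cc_nonzero w.
Proof.
split=> [[chain [nnp [_ full]]] | [skew nz]].
  have ext := dbr_fullP.1 (fun u v => (full u v).1).
  split; last exact: NNP_nonzero.
  by move=> p q m; rewrite -!ext; apply: ext_cc_skew; apply/is_chainP.
split; first by apply/is_chainP => k j l _ _; exact: (skew k j l).2.
split.
  have [k [j [l [jk lk cc_kjl]]]] := skew_cc_nonzero_lower skew nz.
  exact: NNP_of_cc jk lk cc_kjl.
split; first exact: two_sp.
have full := dbr_fullP.2 (ext_cc_cc skew).
by move=> u v; split; [exact: full | exact: dform_full].
Qed.

End DoubleExtension.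

Theorem theorem3p1 (K : fieldType) (n : nat)
  (hK : [pchar K] =i pred0) (hn : (3 <= n)%N)
  (w : 'rV[K]_n -> 'rV[K]_n -> 'rV[K]_n) (hw : bilinear_op w) :
  [<->
    (* (a) *)
    is_quadratic_lie (Lbr w) (@Lform K n) /\ two_step_nilpotent (Lbr w);
    (* (b) *)
    (cocycle_abelian w /\ cyclic_w w /\ (exists a b, w a b != 0) /\
     (forall u v, Lbr w u v = tstar_br w u v /\ Lform u v = tstar_form u v));
    (* (c) *)
    (is_chain w /\ NNP w /\ TwoSP w /\
     (forall u v, dbr w n u v = Lbr w u v /\ dform n u v = Lform u v));
    (* (d) *)
    (n_quadratic (Mfam w) /\ non_null (Mfam w) /\
     (forall u v, quad_br (Mfam w) u v = Lbr w u v /\ quad_form u v = Lform u v))].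
Proof.
have hub := alternating_nonzeroP hw.
have Pa := quadratic_lieP hK hw; have Pb := tstarP hw.
have Pc := double_extensionP hK hw; have Pd := quadratic_familyP hK hw.
tfae=> H.
- by apply/Pb/Pa.
- by apply/Pc/hub/Pb.
- by apply/Pd/Pc.
- by apply/Pa/hub/Pd.
Qed.
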